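(* Let $A$ and $B$ be C$^*$-algebras, where $A$ is unital with unit $1$. Let $p$ be a projection in $A$ and let $T:A\to B$ be a linear map which is a $^*$-homomorphism at $p$ and at $1-p$. Then $T$ is a Jordan $^*$-homomorphism.
   Context: A map $T:A\to B$ between C$^*$-algebras is a $^*$-homomorphism at $z\in A$ if for all $a,b\in A$ with $ab^*=z$ one has $T(ab^* )=T(a)T(b)^*=T(z)$, and for all $c,d\in A$ with $c^*d=z$ one has $T(c^*d)=T(c)^*T(d)=T(z)$. A Jordan $^*$-homomorphism is a linear map $T$ with $T(a\circ b)=T(a)\circ T(b)$ for all $a,b$, where $a\circ b=\frac12(ab+ba)$, and $T(x^* )=T(x)^*$ for all $x$. *)

From HB Require Import structures.
From mathcomp Require Import all_boot all_order all_algebra.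
From mathcomp Require Import complex.
From mathcomp Require Import all_classical all_reals.
Set Implicit Arguments. Unset Strict Implicit. Unset Printing Implicit Defensive.
Import Order.TTheory GRing.Theory Num.Theory.
Local Open Scope ring_scope.
Local Open Scope complex_scope.

Record cstar_struct (R : realType) (V : lmodType R[i]) := CstarStruct {
  cmul : V -> V -> V;
  cstar : V -> V;
  cnorm : V -> R;
  cmulA : forall x y z, cmul x (cmul y z) = cmul (cmul x y) z;
  cmulDl : forall x y z, cmul (x + y) z = cmul x z + cmul y z;
  cmulDr : forall x y z, cmul x (y + z) = cmul x y + cmul x z;
  cmulZl : forall (a : R[i]) x y, cmul (a *: x) y = a *: cmul x y;
  cmulZr : forall (a : R[i]) x y, cmul x (a *: y) = a *: cmul x y;
  cstarD : forall x y, cstar (x + y) = cstar x + cstar y;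
  cstarZ : forall (a : R[i]) x, cstar (a *: x) = a^* *: cstar x;
  cstarK : forall x, cstar (cstar x) = x;
  cstarM : forall x y, cstar (cmul x y) = cmul (cstar y) (cstar x);
  cnorm_ge0 : forall x, 0 <= cnorm x;
  cnorm_eq0 : forall x, cnorm x = 0 -> x = 0;
  cnormD : forall x y, cnorm (x + y) <= cnorm x + cnorm y;
  cnormZ : forall (a : R[i]) x, (cnorm (a *: x))%:C = `|a| * (cnorm x)%:C;
  cnormM : forall x y, cnorm (cmul x y) <= cnorm x * cnorm y;
  cnorm_cstar_id : forall x, cnorm (cmul (cstar x) x) = cnorm x ^+ 2;
  cnorm_complete : forall u : nat -> V,
    (forall e : R, 0 < e -> exists N : nat, forall m n : nat,
        (N <= m)%N -> (N <= n)%N -> cnorm (u m - u n) < e) ->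
    exists l : V, forall e : R, 0 < e -> exists N : nat, forall n : nat,
        (N <= n)%N -> cnorm (u n - l) < e
}.

Definition is_unit_elt (R : realType) (V : lmodType R[i]) (S : cstar_struct V)
  (one : V) : Prop :=
  forall x, cmul S one x = x /\ cmul S x one = x.

Definition is_projection (R : realType) (V : lmodType R[i]) (S : cstar_struct V)
  (p : V) : Prop :=
  cmul S p p = p /\ cstar S p = p.

Definition star_hom_at (R : realType) (A B : lmodType R[i])
  (SA : cstar_struct A) (SB : cstar_struct B) (T : A -> B) (z : A) : Prop :=
  (forall a b, cmul SA a (cstar SA b) = z ->
     T (cmul SA a (cstar SA b)) = cmul SB (T a) (cstar SB (T b))
     /\ cmul SB (T a) (cstar SB (T b)) = T z)
  /\
  (forall c d, cmul SA (cstar SA c) d = z ->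
     T (cmul SA (cstar SA c) d) = cmul SB (cstar SB (T c)) (T d)
     /\ cmul SB (cstar SB (T c)) (T d) = T z).

Definition jordan (R : realType) (V : lmodType R[i]) (S : cstar_struct V)
  (x y : V) : V :=
  2^-1 *: (cmul S x y + cmul S y x).

(* Jordan *-homomorphism (linearity is carried by the type {linear A -> B}). *)
Definition jordan_star_hom (R : realType) (A B : lmodType R[i])
  (SA : cstar_struct A) (SB : cstar_struct B) (T : A -> B) : Prop :=
  (forall a b, T (jordan SA a b) = jordan SB (T a) (T b))
  /\ (forall x, T (cstar SA x) = cstar SB (T x)).

From HB Require Import structures.
From mathcomp Require Import all_boot all_order all_algebra.
From mathcomp Require Import complex.
From mathcomp Require Import all_classical all_reals.
From mathcomp Require Import ring lra.
Set Implicit Arguments. Unset Strict Implicit. Unset Printing Implicit Defensive.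
Import Order.TTheory GRing.Theory Num.Theory.
Local Open Scope ring_scope.
Local Open Scope complex_scope.

(* Let J := T 1. If w v = 1 = v w, apply the hypotheses to the factorizations
   p = w (v p) and 1 - p = w (v (1 - p)) (and symmetrically on the left) and add:
   T w T(v^* )^* = J = T(v^* )^* T w, i.e. T maps inverse pairs to pairs that are
   inverse relative to J.  For a unitary u this says T u T(u)^* = J = T(u)^* T u,
   and the C*-identity gives J T u = T u = T u J.  Every element is a linear
   combination of unitaries (h = (u + u^* )/2 with u = h + i sqrt(1 - h^2), the
   square root being a Banach fixed point), so J is a unit for the range of T.
   For small x, 1 + a x and 1 - a x are invertible, and the resolvent identity,
   transported to B by the linear map g |-> T(g^* )^*, yields
   T((1 + a x)(1 - a x)) = T(1 + a x) T(1 - a x), i.e. T(x^2) = T(x)^2.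
   Polarization gives the Jordan identity, the Jordan triple identity gives
   T(u u^* u) = T u T(u^* ) T u, and with T u T(u)^* = J this forces
   T(u^* ) = T(u)^* on unitaries, hence everywhere. *)

Section RealScalars.
Variable R : realType.

Lemma conjC_realc (r : R) : Num.conj (r%:C) = r%:C.
Proof. by apply/eqP; rewrite eq_complex /= oppr0 !eqxx. Qed.

Lemma conjC_inv2 : Num.conj (2^-1 : R[i]) = 2^-1.
Proof. by rewrite fmorphV rmorph_nat. Qed.

Lemma conjC_i : Num.conj ('i%C : R[i]) = - 'i%C.
Proof. by apply/eqP; rewrite eq_complex /= oppr0 !eqxx. Qed.

Lemma exists_expr_lt (k e : R) : 0 <= k -> k < 1 -> 0 < e ->
  exists N : nat, k ^+ N < e.
Proof.
move=> k0 k1 e0; have [->|kn0] := eqVneq k 0; first by exists 1%N; rewrite expr1.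
have kp : 0 < k by rewrite lt_def kn0.
pose t := k^-1 - 1.
have tp : 0 < t by rewrite subr_gt0 invf_gt1.
have bernoulli n : 1 + n%:R * t <= (1 + t) ^+ n.
  elim: n => [|n IH]; first by rewrite mul0r addr0 expr0.
  rewrite exprS -natr1 mulrDl mul1r.
  have := ler_wpM2l (ltW (ltr_pwDr tp ler01)) IH.
  have : 0 <= n%:R :> R by [].
  nra.
have kt : k = (1 + t)^-1 by rewrite /t addrC subrK invrK.
pose N := Num.bound ((e * t)^-1).
exists N.
have hN : (e * t)^-1 * t < N%:R * t.
  by rewrite ltr_pM2r // archi_boundP // invr_ge0 mulr_ge0 // ltW.
rewrite invfM mulfVK ?gt_eqF // in hN.
have tN : 0 < (1 + t) ^+ N by rewrite exprn_gt0 // addr_gt0.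
rewrite kt exprVn -[e]invrK ltf_pV2 ?posrE ?invr_gt0 //.
by have := bernoulli N; lra.
Qed.

End RealScalars.

Section CstarAlgebra.
Variables (R : realType) (V : lmodType R[i]) (S : cstar_struct V).
Local Notation "x ** y" := (cmul S x y) (at level 40, left associativity).
Local Notation "x ^†" := (cstar S x) (at level 2, format "x ^†").
Local Notation nm := (cnorm S).

Lemma cmul0l x : 0 ** x = 0.
Proof. by rewrite -{1}(scale0r (0 : V)) cmulZl scale0r. Qed.

Lemma cmul0r x : x ** 0 = 0.
Proof. by rewrite -{1}(scale0r (0 : V)) cmulZr scale0r. Qed.

Lemma cmulNl x y : (- x) ** y = - (x ** y).
Proof. by rewrite -scaleN1r cmulZl scaleN1r. Qed.

Lemma cmulNr x y : x ** (- y) = - (x ** y).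
Proof. by rewrite -scaleN1r cmulZr scaleN1r. Qed.

Lemma cmulBl x y z : (x - y) ** z = x ** z - y ** z.
Proof. by rewrite cmulDl cmulNl. Qed.

Lemma cmulBr x y z : x ** (y - z) = x ** y - x ** z.
Proof. by rewrite cmulDr cmulNr. Qed.

Lemma cstar0 : 0^† = 0.
Proof. by rewrite -{1}(scale0r (0 : V)) cstarZ rmorph0 scale0r. Qed.

Lemma cstarN x : (- x)^† = - x^†.
Proof. by rewrite -scaleN1r cstarZ rmorphN1 scaleN1r. Qed.

Lemma cstarB x y : (x - y)^† = x^† - y^†.
Proof. by rewrite cstarD cstarN. Qed.

Lemma cnormZr (r : R) x : 0 <= r -> nm (r%:C *: x) = r * nm x.
Proof. by move=> r0; apply: complexI; rewrite cnormZ ger0_norm ?ler0c // rmorphM. Qed.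

Lemma cnorm0 : nm 0 = 0.
Proof. by rewrite -{1}(scale0r (0 : V)) -[0 : R[i]]/((0 : R)%:C) cnormZr // mul0r. Qed.

Lemma cnormN x : nm (- x) = nm x.
Proof. by apply: complexI; rewrite -scaleN1r cnormZ normrN1 mul1r. Qed.

Lemma cnorm_distC x y : nm (x - y) = nm (y - x).
Proof. by rewrite -cnormN opprB. Qed.

Lemma cnorm_distD x y z : nm (x - z) <= nm (x - y) + nm (y - z).
Proof.
have -> : x - z = (x - y) + (y - z) by rewrite addrA subrK.
exact: cnormD.
Qed.

Lemma cnorm_small_eq0 x : (forall e : R, 0 < e -> nm x <= e) -> x = 0.
Proof.
move=> small; apply/cnorm_eq0/eqP; rewrite eq_le cnorm_ge0 andbT.
by apply/ler_addgt0Pr => e e0; rewrite add0r; apply: small.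
Qed.

Lemma mul_cstar_eq0 x : x ** x^† = 0 -> x = 0.
Proof.
move=> xx0; have := cnorm_cstar_id S x^†; rewrite cstarK xx0 cnorm0.
move=> /esym/eqP; rewrite sqrf_eq0 => /eqP/cnorm_eq0 x0.
by rewrite -[x](cstarK S) x0 cstar0.
Qed.

Lemma cstar_mul_eq0 x : x^† ** x = 0 -> x = 0.
Proof.
move=> xx0; have := cnorm_cstar_id S x; rewrite xx0 cnorm0.
by move=> /esym/eqP; rewrite sqrf_eq0 => /eqP/cnorm_eq0.
Qed.

Lemma cnorm_cstar x : nm x^† = nm x.
Proof.
suff le_star y : nm y <= nm y^†.
  by apply/eqP; rewrite eq_le le_star -{2}[x](cstarK S) le_star.
have [->|y0] := eqVneq (nm y) 0; first exact: cnorm_ge0.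
have yp : 0 < nm y by rewrite lt_def y0 cnorm_ge0.
by rewrite -(ler_pM2r yp) -expr2 -cnorm_cstar_id cnormM.
Qed.

Lemma mulrn2I (u v : V) : u *+ 2 = v *+ 2 -> u = v.
Proof.
move=> uv; apply: (@scalerI _ _ (2 : R[i])); first by rewrite pnatr_eq0.
by rewrite !scaler_nat.
Qed.

Lemma jordan_triple x y : x ** (x ** y + y ** x) + (x ** y + y ** x) ** x
  = (x ** x) ** y + y ** (x ** x) + (x ** y ** x) *+ 2.
Proof.
rewrite cmulDl !cmulDr !cmulA mulr2n.
by rewrite [_ ** y ** x + _]addrC addrACA.
Qed.

Lemma cmulD_idem e y (a b : R[i]) : e ** e = e -> e ** y = y -> y ** e = y ->
  (e + a *: y) ** (e + b *: y) = e + (a + b) *: y + (a * b) *: (y ** y).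
Proof.
move=> ee ey ye; rewrite cmulDl !cmulDr !cmulZl !cmulZr ee ey ye scalerA mulrC.
by rewrite scalerDl !addrA [e + _ + _]addrAC.
Qed.

Definition cclosed (D : V -> Prop) :=
  forall y, (forall e : R, 0 < e -> exists2 z, D z & nm (y - z) < e) -> D y.

Lemma cclosedI (D1 D2 : V -> Prop) :
  cclosed D1 -> cclosed D2 -> cclosed (fun y => D1 y /\ D2 y).
Proof.
move=> cl1 cl2 y approx; split.
- by apply: cl1 => e /approx [z [D1z _] yz]; exists z.
- by apply: cl2 => e /approx [z [_ D2z] yz]; exists z.
Qed.

Lemma cclosed_ball (r : R) : cclosed (fun y => nm y <= r).
Proof.
move=> y approx; apply/ler_addgt0Pr => e /approx [z zr yz].
have := cnorm_distD y z 0; rewrite !subr0; lra.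
Qed.

Lemma cclosed_eq (f g : V -> V) (cf cg : R) : 0 <= cf -> 0 <= cg ->
  (forall y z, nm (f y - f z) <= cf * nm (y - z)) ->
  (forall y z, nm (g y - g z) <= cg * nm (y - z)) ->
  cclosed (fun y => f y = g y).
Proof.
move=> cf0 cg0 lip_f lip_g y approx; apply/eqP; rewrite -subr_eq0; apply/eqP.
apply: cnorm_small_eq0 => e e0.
have den : 0 < cf + cg + 1 by lra.
have [z fgz] := approx _ (divr_gt0 e0 den); rewrite ltr_pdivlMr // => yz.
have := cnorm_distD (f y) (f z) (g y); rewrite {2}fgz [nm (g z - g y)]cnorm_distC.
have := lip_f y z; have := lip_g y z; have := cnorm_ge0 S (y - z); lra.
Qed.

Lemma contraction_fixpoint (D : V -> Prop) (F : V -> V) (k : R) (y0 : V) :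
  cclosed D -> D y0 -> (forall y, D y -> D (F y)) -> 0 <= k -> k < 1 ->
  (forall y z, D y -> D z -> nm (F y - F z) <= k * nm (y - z)) ->
  exists2 y, D y & F y = y.
Proof.
move=> clD Dy0 DF k0 k1 lipF.
pose u n := iter n F y0.
have uS n : u n.+1 = F (u n) by [].
have Du n : D (u n) by elim: n => // n; rewrite uS; apply: DF.
pose c := nm (F y0 - y0) / (1 - k).
have c0 : 0 <= c by rewrite divr_ge0 ?cnorm_ge0 // subr_ge0 ltW.
have step n : nm (u n.+1 - u n) <= k ^+ n * (1 - k) * c.
  elim: n => [|n IH]; first by rewrite expr0 mul1r /c mulrC mulfVK // subr_eq0 gt_eqF.
  have := lipF _ _ (Du n.+1) (Du n); rewrite -!uS => /le_trans; apply.
  rewrite exprS -!mulrA.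
  by apply: ler_wpM2l => //; rewrite mulrA.
have cauchy n j : nm (u (n + j)%N - u n) <= (k ^+ n - k ^+ (n + j)) * c.
  elim: j => [|j IH]; first by rewrite addn0 !subrr cnorm0 mul0r.
  apply: le_trans (cnorm_distD _ (u (n + j)%N) _) _.
  by have := step (n + j)%N; rewrite addnS exprS; lra.
have [l ul] : exists l, forall e : R, 0 < e -> exists N : nat, forall n : nat,
    (N <= n)%N -> nm (u n - l) < e.
  apply: cnorm_complete => e e0.
  have c1 : 0 < c + 1 by lra.
  have [N] := exists_expr_lt k0 k1 (divr_gt0 e0 c1); rewrite ltr_pdivlMr // => kN.
  have kN0 : 0 <= k ^+ N := exprn_ge0 _ k0.
  exists N => m n Nm Nn.
  wlog le_nm : m n Nm Nn / (n <= m)%N => [W|].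
    by case: (leqP n m) => [/W|/ltnW/W]; last rewrite cnorm_distC; apply.
  rewrite -(subnKC le_nm); apply: le_lt_trans (cauchy _ _) _.
  have kNn : k ^+ n <= k ^+ N := ler_wiXn2l k0 (ltW k1) Nn.
  have := exprn_ge0 (n + (m - n)) k0; nra.
have Dl : D l.
  by apply: clD => e /ul [N uN]; exists (u N); rewrite // cnorm_distC uN.
exists l => //; apply/eqP; rewrite -subr_eq0; apply/eqP.
apply: cnorm_small_eq0 => e e0.
have [N uN] := ul (e / 2) (divr_gt0 e0 (ltr0Sn _ 1)).
have := lipF _ _ Dl (Du N); rewrite [nm (l - u N)]cnorm_distC.
have := cnorm_distD (F l) (F (u N)) l; rewrite -uS.
have := uN N (leqnn N); have := uN N.+1 (leqnSn N).
have := cnorm_ge0 S (u N - l); nra.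
Qed.

End CstarAlgebra.

Section UnitalCstarAlgebra.
Variables (R : realType) (V : lmodType R[i]) (S : cstar_struct V) (one : V).
Hypothesis hone : is_unit_elt S one.
Local Notation "x ** y" := (cmul S x y) (at level 40, left associativity).
Local Notation "x ^†" := (cstar S x) (at level 2, format "x ^†").
Local Notation nm := (cnorm S).

Lemma cmul1l x : one ** x = x. Proof. exact: (hone x).1. Qed.
Lemma cmul1r x : x ** one = x. Proof. exact: (hone x).2. Qed.

Lemma cstar1 : one^† = one.
Proof. by have := cstarM S one one^†; rewrite cstarK !cmul1l cstarK => /esym. Qed.

Lemma left_right_inverse_eq l w r : l ** w = one -> w ** r = one -> l = r.
Proof. by move=> lw wr; rewrite -[l]cmul1r -wr cmulA lw cmul1l. Qed.

Lemma resolvent_identity (a b : R[i]) x ga gb :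
  (one + a *: x) ** ga = one -> gb ** (one + b *: x) = one ->
  (a - b) *: (gb ** ga) = a *: ga - b *: gb.
Proof.
move=> wa_ga gb_wb.
transitivity (gb ** ((a - b) *: one) ** ga); first by rewrite cmulZr cmul1r cmulZl.
have -> : (a - b) *: one = a *: (one + b *: x) - b *: (one + a *: x).
  by rewrite !scalerDr !scalerA mulrC opprD addrACA subrr addr0 scalerBl.
by rewrite cmulBr cmulBl !cmulZr !cmulZl gb_wb cmul1l -cmulA wa_ga cmul1r.
Qed.

Lemma exists_inverse_1D x : nm x < 1 ->
  exists g, (one + x) ** g = one /\ g ** (one + x) = one.
Proof.
move=> x1; have x0 := cnorm_ge0 S x.
have closedT : cclosed S (fun _ => True) by [].
have [r _ Fr] : exists2 r, True & one - x ** r = r.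
  apply: (contraction_fixpoint closedT (y0 := 0)) x0 x1 _ => // y z _ _.
  rewrite opprB addrC addrA subrK -cmulBr cnorm_distC.
  exact: cnormM.
have [l _ Fl] : exists2 l, True & one - l ** x = l.
  apply: (contraction_fixpoint closedT (y0 := 0)) x0 x1 _ => // y z _ _.
  rewrite opprB addrC addrA subrK -cmulBl cnorm_distC mulrC.
  exact: cnormM.
have xr : (one + x) ** r = one by rewrite cmulDl cmul1l -{1}Fr subrK.
have lx : l ** (one + x) = one by rewrite cmulDr cmul1r -{1}Fl subrK.
by exists r; split; rewrite // -(left_right_inverse_eq lx xr).
Qed.

Lemma exists_sqrt_1B_sqr h : h^† = h -> nm h <= 2^-1 ->
  exists k, [/\ k^† = k, h ** k = k ** h & k ** k = one - h ** h].
Proof.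
move=> h_sa h_small; have h0 := cnorm_ge0 S h.
pose half : R[i] := (2^-1 : R)%:C.
pose D y := nm y <= 2^-1 /\ (y^† = y /\ h ** y = y ** h).
have closedD : cclosed S D.
  apply: cclosedI; first exact: cclosed_ball.
  apply: cclosedI; first apply: (@cclosed_eq _ _ S _ id 1 1) => // y z.
  - by rewrite -cstarB cnorm_cstar mul1r.
  - by rewrite mul1r.
  apply: (@cclosed_eq _ _ S _ _ (nm h) (nm h)) => // y z.
  - by rewrite -cmulBr cnormM.
  - by rewrite -cmulBl mulrC cnormM.
have sqr_small y : nm y <= 2^-1 -> nm (y ** y) <= 4^-1.
  move=> y_small; apply: le_trans (cnormM S y y) _.
  by have := cnorm_ge0 S y; nra.
have half_ge0 : 0 <= 2^-1 :> R by lra.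
have [y [_ [y_sa hy]] Fy] : exists2 y, D y & half *: (h ** h + y ** y) = y.
  apply: (contraction_fixpoint closedD (y0 := 0) (k := 2^-1 : R)) => //.
  - by split; [rewrite cnorm0; lra | rewrite cstar0 cmul0l cmul0r].
  - move=> y [y_small [y_sa hy]]; rewrite /half; split; last split.
    + rewrite (cnormZr S _ half_ge0); have := cnormD S (h ** h) (y ** y).
      by have := sqr_small _ h_small; have := sqr_small _ y_small; lra.
    + by rewrite cstarZ conjC_realc cstarD !cstarM h_sa y_sa.
    + rewrite cmulZr cmulZl cmulDr cmulDl cmulA; congr (_ *: (_ + _)).
      by rewrite cmulA hy -cmulA hy cmulA.
  - lra.
  - move=> y z [y_small _] [z_small _].
    have -> : half *: (h ** h + y ** y) - half *: (h ** h + z ** z)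
              = half *: (y ** (y - z) + (y - z) ** z).
      by rewrite -scalerBr cmulBr cmulBl opprD addrACA subrr add0r addrA subrK.
    rewrite (cnormZr S _ half_ge0); have := cnormD S (y ** (y - z)) ((y - z) ** z).
    have := cnormM S y (y - z); have := cnormM S (y - z) z.
    have := cnorm_ge0 S y; have := cnorm_ge0 S z; have := cnorm_ge0 S (y - z).
    nra.
(* (1 - y)^2 = 1 - 2 y + y^2 = 1 - h^2 by the fixed point equation. *)
exists (one - y); split.
- by rewrite cstarB cstar1 y_sa.
- by rewrite cmulBr cmulBl cmul1l cmul1r hy.
- have hh : h ** h = y + y - y ** y.
    have halves : 2^-1 + 2^-1 = 1 :> R by lra.
    by rewrite -[in y + y]Fy -scalerDl /half -rmorphD halves rmorph1 scale1r addrK.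
  rewrite hh cmulBr !cmulBl !cmul1l cmul1r -addrA; congr (one + _).
  by rewrite !opprD addrA.
Qed.

Definition unitary u := u ** u^† = one /\ u^† ** u = one.

Lemma unitary_cstar u : unitary u -> unitary u^†.
Proof. by case=> uu' u'u; split; rewrite cstarK. Qed.

Lemma selfadjoint_unitary_mean h : h^† = h -> nm h <= 2^-1 ->
  exists2 u, unitary u & h = 2^-1 *: (u + u^†).
Proof.
move=> h_sa h_small; have [k [k_sa hk kk]] := exists_sqrt_1B_sqr h_sa h_small.
have u_star : (h + 'i%C *: k)^† = h - 'i%C *: k.
  by rewrite cstarD cstarZ conjC_i h_sa k_sa scaleNr.
have ii : 'i%C * 'i%C = -1 :> R[i] by rewrite -expr2 sqr_i.
exists (h + 'i%C *: k); last first.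
  rewrite u_star addrACA subrr addr0 -mulr2n -scalerMnr scalerMnl -mulr_natr.
  by rewrite mulVf ?pnatr_eq0 // scale1r.
rewrite /unitary u_star; split.
- rewrite cmulDl !cmulBr !cmulZl !cmulZr scalerA ii hk kk scaleN1r.
  by rewrite opprK addrA subrK addrC subrK.
- rewrite cmulBl !cmulDr !cmulZl !cmulZr.
  by rewrite scalerA ii hk kk scaleN1r opprD opprK addrA addrK addrC subrK.
Qed.

Lemma unitary_ind (P : V -> Prop) :
  (forall u, unitary u -> P u) ->
  (forall x y, P x -> P y -> P (x + y)) ->
  (forall (c : R[i]) x, P x -> P (c *: x)) ->
  forall x, P x.
Proof.
move=> Pu PD PZ.
have P_sa h : h^† = h -> P h.
  move=> h_sa; pose r := 2 * (nm h + 1).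
  have r_gt0 : 0 < r by have := cnorm_ge0 S h; rewrite /r; lra.
  have h'_sa : (r^-1%:C *: h)^† = r^-1%:C *: h by rewrite cstarZ conjC_realc h_sa.
  have h'_small : nm (r^-1%:C *: h) <= 2^-1.
    rewrite cnormZr; last by rewrite invr_ge0 ltW.
    by rewrite ler_pdivrMl // /r; have := cnorm_ge0 S h; lra.
  have [u u_unitary h'E] := selfadjoint_unitary_mean h'_sa h'_small.
  have -> : h = r%:C *: (r^-1%:C *: h).
    by rewrite scalerA -rmorphM mulfV ?gt_eqF // scale1r.
  by rewrite h'E; apply/PZ/PZ/PD; apply/Pu; last apply: unitary_cstar.
move=> x; pose h1 := 2^-1 *: (x + x^†); pose h2 := 2^-1 *: ('i%C *: (x^† - x)).
have -> : x = h1 + 'i%C *: h2.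
  rewrite /h1 /h2 !scalerA mulrAC -expr2 sqr_i mulN1r scaleNr -scalerN opprB.
  rewrite -scalerDr addrACA subrr addr0 -mulr2n -scalerMnr scalerMnl -mulr_natr.
  by rewrite mulVf ?pnatr_eq0 // scale1r.
apply/PD/PZ; apply/P_sa.
- by rewrite cstarZ conjC_inv2 cstarD cstarK addrC.
- rewrite !cstarZ conjC_inv2 conjC_i cstarB cstarK; congr (_ *: _).
  by rewrite scaleNr -scalerN opprB.
Qed.

End UnitalCstarAlgebra.

Section StarHomAtComplementaryElements.
Variables (R : realType) (A B : lmodType R[i]) (SA : cstar_struct A) (SB : cstar_struct B).
Variables (one z : A) (T : {linear A -> B}).
Hypothesis hone : is_unit_elt SA one.
Local Notation "x ⊙ y" := (cmul SA x y) (at level 40, left associativity).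
Local Notation "x ⊛ y" := (cmul SB x y) (at level 40, left associativity).
Local Notation "x ^†" := (cstar SA x) (at level 2, format "x ^†").
Local Notation "x ^‡" := (cstar SB x) (at level 2, format "x ^‡").
Local Notation J := (T one).

Lemma star_hom_at_invertible c w v : star_hom_at SA SB T c ->
  w ⊙ v = one -> v ⊙ w = one ->
  T w ⊛ (T (v ⊙ c)^†)^‡ = T c /\ (T (c ⊙ v)^†)^‡ ⊛ T w = T c.
Proof.
move=> [hom_r hom_l] wv vw; split.
- have := hom_r w (v ⊙ c)^†; rewrite cstarK cmulA wv (cmul1l hone).
  by case.
- have := hom_l (c ⊙ v)^† w; rewrite cstarK -cmulA vw (cmul1r hone).
  by case.
Qed.

Hypotheses (hTz : star_hom_at SA SB T z) (hT1z : star_hom_at SA SB T (one - z)).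

Lemma T_inverse_pair w v : w ⊙ v = one -> v ⊙ w = one ->
  T w ⊛ (T v^†)^‡ = J /\ (T v^†)^‡ ⊛ T w = J.
Proof.
move=> wv vw.
have [rz lz] := star_hom_at_invertible hTz wv vw.
have [r1z l1z] := star_hom_at_invertible hT1z wv vw.
have split_one : one = z + (one - z) by rewrite addrC subrK.
have splitJ : J = T z + T (one - z) by rewrite -raddfD -split_one.
split.
- rewrite splitJ -{1}rz -r1z -cmulDr -cstarD -raddfD -cstarD -cmulDr.
  by rewrite -split_one (cmul1r hone).
- rewrite splitJ -{1}lz -l1z -cmulDl -cstarD -raddfD -cstarD -cmulDl.
  by rewrite -split_one (cmul1l hone).
Qed.

Lemma J_cstar : J^‡ = J.
Proof.
have one1 := cmul1l hone one.
have [JJ' _] := T_inverse_pair one1 one1; rewrite (cstar1 hone) in JJ'.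
by rewrite -{1}JJ' cstarM cstarK.
Qed.

Lemma J_idem : J ⊛ J = J.
Proof.
have one1 := cmul1l hone one.
by have [] := T_inverse_pair one1 one1; rewrite (cstar1 hone) J_cstar.
Qed.

Lemma unitary_T_absorb u : unitary SA one u -> J ⊛ T u = T u /\ T u ⊛ J = T u.
Proof.
case=> uu' u'u; have [XX' X'X] := T_inverse_pair uu' u'u; rewrite cstarK in XX' X'X.
(* With X := T u and X X^‡ = J: (X - J X) (X - J X)^‡ = J - J - J + J = 0. *)
split; apply/eqP; rewrite eq_sym -subr_eq0; apply/eqP.
- apply: (mul_cstar_eq0 (S := SB)); rewrite cstarB cstarM J_cstar cmulBl !cmulBr !cmulA XX'.
  by rewrite -[J ⊛ T u ⊛ (T u)^‡]cmulA XX' !J_idem !subrr.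
- apply: (cstar_mul_eq0 (S := SB)); rewrite cstarB cstarM J_cstar cmulBl !cmulBr !cmulA X'X.
  by rewrite -[J ⊛ (T u)^‡ ⊛ T u]cmulA X'X !J_idem !subrr.
Qed.

Lemma T_absorb y : J ⊛ T y = T y /\ T y ⊛ J = T y.
Proof.
move: y; apply: (unitary_ind hone).
- by move=> u /unitary_T_absorb.
- by move=> x y [lx rx] [ly ry]; rewrite raddfD cmulDr cmulDl lx rx ly ry.
- by move=> c x [lx rx]; rewrite linearZ cmulZr cmulZl lx rx.
Qed.

Lemma T_absorbl y : J ⊛ T y = T y. Proof. exact: (T_absorb y).1. Qed.
Lemma T_absorbr y : T y ⊛ J = T y. Proof. exact: (T_absorb y).2. Qed.

Lemma T_mul_1D (a b : R[i]) (x : A) : cnorm SA (a *: x) < 1 -> cnorm SA (b *: x) < 1 ->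
  a != b -> T ((one + a *: x) ⊙ (one + b *: x)) = T (one + a *: x) ⊛ T (one + b *: x).
Proof.
move=> ax bx ab.
have [ga [wa_ga ga_wa]] := exists_inverse_1D hone ax.
have [gb [wb_gb gb_wb]] := exists_inverse_1D hone bx.
set wa := one + a *: x in wa_ga ga_wa *; set wb := one + b *: x in wb_gb gb_wb *.
(* [Y] is linear and sends an inverse of w to the J-inverse of T w, so it
   carries the resolvent identity of A over to B. *)
pose Y g := (T g^†)^‡.
have YZ c g : Y (c *: g) = c *: Y g by rewrite /Y cstarZ linearZ cstarZ conjCK.
have YB g h : Y (g - h) = Y g - Y h by rewrite /Y cstarB raddfB cstarB.
have W_gg : (wa ⊙ wb) ⊙ (gb ⊙ ga) = one.
  by rewrite -cmulA [wb ⊙ _]cmulA wb_gb (cmul1l hone) wa_ga.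
have gg_W : (gb ⊙ ga) ⊙ (wa ⊙ wb) = one.
  by rewrite -cmulA [ga ⊙ _]cmulA ga_wa (cmul1l hone) gb_wb.
have [Xa_Ya _] : T wa ⊛ Y ga = J /\ _ := T_inverse_pair wa_ga ga_wa.
have [Xb_Yb _] : T wb ⊛ Y gb = J /\ _ := T_inverse_pair wb_gb gb_wb.
have [_ YW_XW] : _ /\ Y (gb ⊙ ga) ⊛ T (wa ⊙ wb) = J := T_inverse_pair W_gg gg_W.
have YW : (a - b) *: Y (gb ⊙ ga) = a *: Y ga - b *: Y gb.
  by rewrite -YZ (resolvent_identity hone wa_ga gb_wb) YB !YZ.
have Xa : T wa = J + a *: T x by rewrite /wa linearD linearZ.
have Xb : T wb = J + b *: T x by rewrite /wb linearD linearZ.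
have comm : T wa ⊛ T wb = T wb ⊛ T wa.
  by rewrite Xa Xb !cmulD_idem ?J_idem ?T_absorbl ?T_absorbr // [a + b]addrC [a * b]mulrC.
have XXY : T wa ⊛ T wb ⊛ Y (gb ⊙ ga) = J.
  apply: (scalerI (_ : a - b != 0)); first by rewrite subr_eq0.
  rewrite -cmulZr YW cmulBr !cmulZr [in T wa ⊛ T wb ⊛ Y ga]comm -!cmulA Xa_Ya Xb_Yb.
  rewrite !T_absorbr Xa Xb !scalerDr !scalerA mulrC opprD addrACA subrr addr0.
  by rewrite scalerBl.
transitivity (T wa ⊛ T wb ⊛ Y (gb ⊙ ga) ⊛ T (wa ⊙ wb)).
  by rewrite XXY T_absorbl.
by rewrite -cmulA YW_XW -cmulA T_absorbr.
Qed.

Lemma T_sqr x : T (x ⊙ x) = T x ⊛ T x.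
Proof.
pose a := ((cnorm SA x + 1)^-1)%:C.
have x0 := cnorm_ge0 SA x.
have ax : cnorm SA (a *: x) < 1.
  by rewrite cnormZr ?invr_ge0 ?addr_ge0 // ltr_pdivrMl ?ltr_wpDl //; lra.
have bx : cnorm SA ((- a) *: x) < 1 by rewrite scaleNr cnormN.
have a0 : a != 0.
  by rewrite /a -[0 : R[i]]/((0 : R)%:C) (inj_eq (@complexI R)) invr_eq0 gt_eqF ?ltr_wpDl.
have ab : a != - a by rewrite -subr_eq0 opprK -mulr2n mulrn_eq0.
have := T_mul_1D ax bx ab.
rewrite cmulD_idem ?(cmul1l hone) ?(cmul1r hone) // addrN scale0r addr0.
rewrite !linearD !linearZ cmulD_idem ?J_idem ?T_absorbl ?T_absorbr // addrN scale0r addr0.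
move=> /addrI/scalerI; apply.
by rewrite mulf_eq0 oppr_eq0 negb_or a0.
Qed.

Lemma T_jordan x y : T (x ⊙ y + y ⊙ x) = T x ⊛ T y + T y ⊛ T x.
Proof.
have := T_sqr (x + y).
rewrite cmulDl !cmulDr !linearD !T_sqr cmulDl !cmulDr !addrA => /addIr sum_sqr.
by apply: (addrI (T x ⊛ T x)); rewrite !addrA.
Qed.

Lemma T_triple x y : T (x ⊙ y ⊙ x) = T x ⊛ T y ⊛ T x.
Proof.
apply: mulrn2I.
have := jordan_triple SB (T x) (T y).
have := f_equal T (jordan_triple SA x y).
rewrite !T_jordan linearD raddfMn T_jordan T_sqr => ->.
by move/addrI.
Qed.

Lemma unitary_T_cstar u : unitary SA one u -> T u^† = (T u)^‡.
Proof.
case=> uu' u'u; have [XX' X'X] := T_inverse_pair uu' u'u; rewrite cstarK in XX' X'X.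
have triple : T u ⊛ T u^† ⊛ T u = T u by rewrite -T_triple -cmulA u'u (cmul1r hone).
transitivity ((T u)^‡ ⊛ (T u ⊛ T u^† ⊛ T u) ⊛ (T u)^‡).
  by rewrite !cmulA X'X T_absorbl -cmulA XX' T_absorbr.
by rewrite triple X'X -{1}J_cstar -cstarM T_absorbr.
Qed.

Lemma T_cstar x : T x^† = (T x)^‡.
Proof.
move: x; apply: (unitary_ind hone).
- exact: unitary_T_cstar.
- by move=> x y Tx Ty; rewrite cstarD !linearD cstarD Tx Ty.
- by move=> c x Tx; rewrite cstarZ !linearZ cstarZ Tx.
Qed.

Lemma T_jordan_star_hom : jordan_star_hom SA SB T.
Proof.
split; last exact: T_cstar.
by move=> x y; rewrite /jordan linearZ T_jordan.
Qed.

End StarHomAtComplementaryElements.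

Theorem corollary2p12 (R : realType) (A B : lmodType R[i])
  (SA : cstar_struct A) (SB : cstar_struct B) (one : A)
  (hone : is_unit_elt SA one) (p : A) (hp : is_projection SA p)
  (T : {linear A -> B})
  (hTp : star_hom_at SA SB T p) (hT1p : star_hom_at SA SB T (one - p)) :
  jordan_star_hom SA SB T.
Proof.
exact: T_jordan_star_hom hone hTp hT1p. Qed.
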